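(* Let $r>0$, $V_T>0$ and $R_0\ge r$. Define $$f(t,V_s)=1+\frac{1}{2R_0(R_0+r)}\left(r^2-V_T^2\left(\frac{2\pi R_0}{V_s}+t\right)^2\right)-\cos\!\left(\frac{V_s t}{R_0}\right)$$ and $$V_{s_2}=\frac{\pi R_0V_T(R_0+r)+V_T\sqrt{R_0(R_0+r)\left[\pi^2R_0(R_0+r)+r^2\right]}}{r(R_0+r)}.$$ Then the minimum of $t\mapsto f(t,V_{s_2})$ over $0\le t\le\frac{\pi R_0}{2V_{s_2}}$ is strictly positive, that is, $f(t^*,V_{s_2})>0$ at the minimizer $t^*$. In particular $f(t,V_{s_2})\ge 0$ for all $t\in\left[0,\frac{\pi R_0}{2V_{s_2}}\right]$.
   Context: $R_0$ is the initial radius of the disk containing the evaders, $2r$ is the length of the sweeper's line sensor, $V_T$ is the maximal evader speed, and $V_{s_2}$ is a candidate sweeper speed. The condition $f(t,V_s)\ge 0$ for $0\le t\le\pi R_0/(2V_s)$ is the paper's criterion for the sweeper to be fast enough to accomplish the confinement task. *)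

From Stdlib Require Import Reals.
Open Scope R_scope.

Definition f_sweep (R0 r VT : R) (t Vs : R) : R :=
  1 + / (2 * R0 * (R0 + r)) * (r ^ 2 - VT ^ 2 * (2 * PI * R0 / Vs + t) ^ 2)
    - cos (Vs * t / R0).

Definition Vs2 (R0 r VT : R) : R :=
  (PI * R0 * VT * (R0 + r)
     + VT * sqrt (R0 * (R0 + r) * (PI ^ 2 * R0 * (R0 + r) + r ^ 2)))
  / (r * (R0 + r)).

From Stdlib Require Import Reals Lra Psatz.
Open Scope R_scope.

(* With u = V t / R0 and q = R0 VT / V one has
   f(t, V) = 1 - cos u + (r^2 - q^2 (2 pi + u)^2) / (2 R0 (R0 + r)),
   and V_{s_2} is exactly the speed for which q is the positive root of
   r q^2 + 2 pi R0 (R0 + r) q = r R0 (R0 + r).  On [0, pi/2] we have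
   1 - cos u >= u^2/3, so f is bounded below by a quadratic in u; the relation
   satisfied by q makes its discriminant negative, hence f > 0 on the whole
   interval, and the minimum exists by continuity. *)

Lemma one_sub_cos_ge (u : R) : 0 <= u <= PI / 2 -> u ^ 2 / 3 <= 1 - cos u.
Proof.
  intros [hu0 hu1].
  assert (hPI := PI_4).
  destruct (cos_bound u 0 ltac:(lra) hu1) as [_ hcos].
  unfold cos_approx, cos_term in hcos; simpl in hcos.
  assert (hu2 : u ^ 2 <= 4) by nra.
  nra.
Qed.

Lemma quadratic_pos (a b c x : R) :
  0 < a -> b ^ 2 < 4 * a * c -> 0 < a * x ^ 2 + b * x + c.
Proof.
  intros ha hdisc.
  assert (hsq : 4 * a * (a * x ^ 2 + b * x + c) = (2 * a * x + b) ^ 2 + (4 * a * c - b ^ 2))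
    by ring.
  assert (hsq0 : 0 <= (2 * a * x + b) ^ 2) by apply pow2_ge_0.
  apply Rmult_lt_reg_l with (4 * a); lra.
Qed.

Lemma quadratic_lower_bound_pos (r K P q u : R) :
  0 < r -> 2 * r ^ 2 <= K -> 1 <= P -> 0 < q ->
  r * q ^ 2 + 2 * P * K * q = r * K ->
  0 < 2 * K * (u ^ 2 / 3) + r ^ 2 - q ^ 2 * (2 * P + u) ^ 2.
Proof.
  intros hr hK hP hq hroot.
  assert (hgap : K * (r - 2 * P * q) = r * q ^ 2) by lra.
  assert (hK0 : 0 < K) by nra.
  assert (h2Pq : 2 * P * q < r).
  { apply Rlt_0_minus, Rmult_lt_reg_l with K; [exact hK0|].
    rewrite Rmult_0_r, hgap. apply Rmult_lt_0_compat; [exact hr | apply pow_lt, hq]. }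
  assert (h2q : 2 * q < r) by nra.
  assert (hq8 : 8 * q ^ 2 <= K) by nra.
  assert (hdisc : (- (4 * P * q ^ 2)) ^ 2 < 4 * (2 * K / 3 - q ^ 2) * (r ^ 2 - 4 * P ^ 2 * q ^ 2)).
  { apply Rmult_lt_reg_l with K; [lra|].
    assert (hE : K * (4 * (2 * K / 3 - q ^ 2) * (r ^ 2 - 4 * P ^ 2 * q ^ 2))
                 = 4 * (2 * K / 3 - q ^ 2) * (r * q ^ 2) * (r + 2 * P * q))
      by (rewrite <- hgap; ring).
    rewrite hE.
    assert (hPq : 0 < 2 * P * q) by nra.
    assert (hlin : 8 * P ^ 2 * q ^ 2 < r * (r + 2 * P * q)).
    { assert (0 < (r - 2 * P * q) * (r + 2 * P * q)) by (apply Rmult_lt_0_compat; lra).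
      assert (0 < 2 * P * q * (r - 2 * P * q)) by (apply Rmult_lt_0_compat; lra).
      nra. }
    assert (hA : K / 2 <= 2 * K / 3 - q ^ 2) by lra.
    assert (hKq : 0 < K * q ^ 2) by (assert (0 < q ^ 2) by (apply pow_lt; lra); nra).
    assert (hrq : 0 < q ^ 2 * (r * (r + 2 * P * q))) by (apply Rmult_lt_0_compat; nra).
    nra. }
  replace (2 * K * (u ^ 2 / 3) + r ^ 2 - q ^ 2 * (2 * P + u) ^ 2)
    with ((2 * K / 3 - q ^ 2) * u ^ 2 + (- (4 * P * q ^ 2)) * u + (r ^ 2 - 4 * P ^ 2 * q ^ 2))
    by field.
  apply quadratic_pos; [lra | exact hdisc].
Qed.

Lemma f_sweep_rescaled (R0 r VT t V : R) : R0 <> 0 -> V <> 0 ->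
  f_sweep R0 r VT t V
  = 1 + / (2 * R0 * (R0 + r)) * (r ^ 2 - (R0 * VT / V) ^ 2 * (2 * PI + V * t / R0) ^ 2)
      - cos (V * t / R0).
Proof.
  intros hR0 hV. unfold f_sweep.
  replace (VT ^ 2 * (2 * PI * R0 / V + t) ^ 2)
    with ((R0 * VT / V) ^ 2 * (2 * PI + V * t / R0) ^ 2) by (field; auto).
  reflexivity.
Qed.

Lemma Vs2_gt0 (R0 r VT : R) : 0 < r -> 0 < VT -> 0 < R0 -> 0 < Vs2 R0 r VT.
Proof.
  intros hr hVT hR0. unfold Vs2.
  assert (hPI := PI_RGT_0).
  assert (hS := sqrt_pos (R0 * (R0 + r) * (PI ^ 2 * R0 * (R0 + r) + r ^ 2))).
  apply Rdiv_lt_0_compat; [|nra].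
  assert (hPIR0 : 0 < PI * R0) by (apply Rmult_lt_0_compat; lra).
  assert (0 < PI * R0 * VT * (R0 + r))
    by (apply Rmult_lt_0_compat; [apply Rmult_lt_0_compat|]; lra).
  nra.
Qed.

Lemma Vs2_ratio_root (R0 r VT : R) : 0 < r -> 0 < VT -> 0 < R0 ->
  r * (R0 * VT / Vs2 R0 r VT) ^ 2 + 2 * PI * (R0 * (R0 + r)) * (R0 * VT / Vs2 R0 r VT)
  = r * (R0 * (R0 + r)).
Proof.
  intros hr hVT hR0.
  assert (hPI := PI_RGT_0).
  set (K := R0 * (R0 + r)).
  assert (hK : 0 < K) by (unfold K; nra).
  set (S := sqrt (K * (PI ^ 2 * K + r ^ 2))).
  assert (hS0 : 0 <= S) by apply sqrt_pos.
  assert (hS2 : S * S = K * (PI ^ 2 * K + r ^ 2)) by (apply sqrt_sqrt, Rmult_le_pos; nra).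
  assert (hX : 0 < PI * K + S) by nra.
  assert (hq : R0 * VT / Vs2 R0 r VT = r * K / (PI * K + S)).
  { unfold Vs2.
    replace (R0 * (R0 + r) * (PI ^ 2 * R0 * (R0 + r) + r ^ 2)) with (K * (PI ^ 2 * K + r ^ 2))
      by (unfold K; ring).
    fold S.
    replace (PI * R0 * VT * (R0 + r) + VT * S) with (VT * (PI * K + S)) by (unfold K; ring).
    assert (hX0 : PI * K + S <> 0) by lra.
    unfold K in *; field; repeat split; nra. }
  assert (hXsq : (PI * K + S) ^ 2 = 2 * PI * K * (PI * K + S) + r ^ 2 * K) by nra.
  rewrite hq.
  replace (r * (r * K / (PI * K + S)) ^ 2 + 2 * PI * K * (r * K / (PI * K + S)))
    with (r * K / (PI * K + S) ^ 2 * (2 * PI * K * (PI * K + S) + r ^ 2 * K)) by (field; lra).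
  rewrite <- hXsq. field; lra.
Qed.

Lemma f_sweep_Vs2_pos (r VT R0 t : R) : 0 < r -> 0 < VT -> r <= R0 ->
  0 <= t <= PI * R0 / (2 * Vs2 R0 r VT) -> 0 < f_sweep R0 r VT t (Vs2 R0 r VT).
Proof.
  intros hr hVT hR0 ht.
  assert (hPI := PI_RGT_0).
  assert (hV := Vs2_gt0 R0 r VT hr hVT ltac:(lra)).
  set (V := Vs2 R0 r VT) in *.
  set (u := V * t / R0).
  assert (hu : 0 <= u <= PI / 2).
  { unfold u; split.
    - apply Rmult_le_pos; [nra | left; apply Rinv_0_lt_compat; lra].
    - replace (PI / 2) with (V * (PI * R0 / (2 * V)) / R0) by (field; lra).
      apply Rmult_le_compat_r; [left; apply Rinv_0_lt_compat; lra | nra]. }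
  set (K := R0 * (R0 + r)).
  assert (hK : 2 * r ^ 2 <= K) by (unfold K; nra).
  assert (hq : 0 < R0 * VT / V) by (apply Rdiv_lt_0_compat; nra).
  assert (hquad := quadratic_lower_bound_pos r K PI (R0 * VT / V) u hr hK
                     ltac:(assert (hPI1 := PI2_1); lra) hq (Vs2_ratio_root R0 r VT hr hVT ltac:(lra))).
  assert (hcos := one_sub_cos_ge u hu).
  rewrite f_sweep_rescaled by lra. fold u.
  replace (2 * R0 * (R0 + r)) with (2 * K) by (unfold K; ring).
  apply Rlt_le_trans with (/ (2 * K) * (2 * K * (u ^ 2 / 3) + r ^ 2 - (R0 * VT / V) ^ 2 * (2 * PI + u) ^ 2)).
  - apply Rmult_lt_0_compat; [apply Rinv_0_lt_compat; nra | exact hquad].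
  - replace (/ (2 * K) * (2 * K * (u ^ 2 / 3) + r ^ 2 - (R0 * VT / V) ^ 2 * (2 * PI + u) ^ 2))
      with (u ^ 2 / 3 + / (2 * K) * (r ^ 2 - (R0 * VT / V) ^ 2 * (2 * PI + u) ^ 2)) by (field; nra).
    lra.
Qed.

Theorem theorem11 (r VT R0 : R) (hr : 0 < r) (hVT : 0 < VT) (hR0 : r <= R0) :
  (exists tstar : R,
      0 <= tstar <= PI * R0 / (2 * Vs2 R0 r VT) /\
      (forall t : R, 0 <= t <= PI * R0 / (2 * Vs2 R0 r VT) ->
         f_sweep R0 r VT tstar (Vs2 R0 r VT) <= f_sweep R0 r VT t (Vs2 R0 r VT)) /\
      0 < f_sweep R0 r VT tstar (Vs2 R0 r VT)) /\
  (forall t : R, 0 <= t <= PI * R0 / (2 * Vs2 R0 r VT) ->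
     0 <= f_sweep R0 r VT t (Vs2 R0 r VT)).
Proof.
  assert (hpos := f_sweep_Vs2_pos r VT R0).
  assert (hV := Vs2_gt0 R0 r VT hr hVT ltac:(lra)).
  assert (hPI := PI_RGT_0).
  split.
  - destruct (continuity_ab_min (fun t => f_sweep R0 r VT t (Vs2 R0 r VT)) 0
                (PI * R0 / (2 * Vs2 R0 r VT))) as [tstar [hmin htstar]].
    + apply Rmult_le_pos; [nra | left; apply Rinv_0_lt_compat; lra].
    + intros c _. unfold f_sweep. reg.
    + exists tstar. auto.
  - intros t ht. left. auto.
Qed.
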